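(* Let $n\ge7$ and let $p$ be an odd prime with $p+3\le n$. In the symmetric group $\mathfrak S_n$ put $a=(1,p+2,p+1)(2,p+3)$ and $c=(1,2,\dots,p)(p+1,p+2,\dots,n)$. Then: (1) there is no automorphism $\varphi$ of $\mathfrak S_n$ with $\varphi(a)=a^{-1}$ and $\varphi(c)=c^{-1}$; (2) $\mathfrak S_n=\langle a,c\rangle$. *)

From HB Require Import structures.
From mathcomp Require Import all_boot all_fingroup.
Set Implicit Arguments. Unset Strict Implicit. Unset Printing Implicit Defensive.

(* Points 1..n of the paper are the ordinals 0..n-1 of 'I_n. *)
Local Open Scope group_scope.

(* transposition of the (0-based) points x and y of 'I_n
   (identity if a point is out of range; never happens under the
   hypotheses of the theorem) *)
Definition tp (n : nat) (x y : nat) : 'S_n :=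
  match insub x, insub y with
  | Some i, Some j => tperm i j
  | _, _ => 1
  end.

(* the cycle (x0, x1, ..., xk) : x0 -> x1 -> ... -> xk -> x0.
   In MathComp, (s * t) x = t (s x), so
   tperm x0 x1 * tperm x0 x2 * ... * tperm x0 xk is this cycle. *)
Definition cyc (n : nat) (s : seq nat) : 'S_n :=
  match s with
  | [::] => 1
  | x0 :: t => \prod_(k <- t) tp n x0 k
  end.

(* a = (1, p+2, p+1)(2, p+3)  in 1-based notation *)
Definition elt_a (n p : nat) : 'S_n :=
  cyc n [:: 0%N; p.+1; p] * cyc n [:: 1%N; p.+2].

(* c = (1, 2, ..., p)(p+1, ..., n)  in 1-based notation *)
Definition elt_c (n p : nat) : 'S_n :=
  cyc n (iota 0%N p) * cyc n (iota p (n - p)).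

From HB Require Import structures.
From mathcomp Require Import all_boot all_fingroup zify.
Set Implicit Arguments. Unset Strict Implicit. Unset Printing Implicit Defensive.
Local Open Scope group_scope.

(* Part (1), in the paper's numbering: x := (a^3)^(c^-1) is the transposition
   (1, p+2), and x a = (1, p+1)(2, p+3) is an involution.  An automorphism
   inverting a and c would turn (x a)^2 = 1 into (a (a^3)^c)^2 = 1, but the
   left-hand side moves the point 1.
   Part (2): the pairs i, j with (i, j) in <a, c> form an equivalence relation
   invariant under a and c.  Conjugating (1, p+2) by a gives (p+1, p+2), and
   conjugating further by c links p+1, ..., n in a chain and each of 1, ..., p
   to p+1; so <a, c> contains every (p+1, j), and these generate S_n. *)

Definition swap (x y z : nat) : nat := if z == x then y else if z == y then x else z.

Ltac case_ifs :=
  repeat (match goal with |- context [if ?b then _ else _] =>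
     lazymatch b with context [if _ then _ else _] => fail | _ =>
     let H := fresh "H" in case: (boolP b) => H end end);
  try lia.

Lemma tpE n x y (i : 'I_n) : x < n -> y < n -> tp n x y i = swap x y i :> nat.
Proof.
move=> ltxn ltyn; rewrite /tp !insubT /swap /=.
case: tpermP => [->|->|/eqP neix /eqP neiy]; first by rewrite eqxx.
  by rewrite /=; case: eqP => [->|_]; rewrite ?eqxx.
by rewrite -!val_eqE /= in neix neiy; rewrite (negPf neix) (negPf neiy).
Qed.

Lemma cyc_iotaE n x k (i : 'I_n) : x + k < n ->
  cyc n (iota x k.+1) i
    = (if x <= i <= x + k then if i == x + k :> nat then x else i.+1 else i) :> nat.
Proof.
elim: k => [|k IHk] ltxkn.
  by rewrite /= big_nil perm1 addn0 -eqn_leq; case: eqP => [->|]; rewrite ?eqxx.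
rewrite -[k.+2]addn1 iotaD /= big_cat big_seq1 /= permM tpE; [|lia|lia].
by move: IHk; rewrite /= => ->; [rewrite /swap; case_ifs | lia].
Qed.

Definition c_fun n p i := if i.+1 == p then 0 else if i.+1 == n then p else i.+1.

Lemma elt_cE n p (i : 'I_n) : 0 < p < n -> elt_c n p i = c_fun n p i :> nat.
Proof.
case: p => [//|p] /= ltpn; rewrite /elt_c permM.
have [m em] : exists m, n - p.+1 = m.+1 by exists (n - p.+1).-1; lia.
rewrite em !cyc_iotaE; [|lia|lia].
by have := ltn_ord i; rewrite /c_fun; case_ifs.
Qed.

Definition a_fun p i :=
  if i == 0 then p.+1 else if i == p.+1 then p else if i == p then 0 else swap 1 p.+2 i.

Lemma elt_aE n p (i : 'I_n) : 1 < p -> p.+2 < n -> elt_a n p i = a_fun p i :> nat.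
Proof.
move=> lt1p ltpn; rewrite /elt_a /= !big_cons !big_nil !mulg1 !permM !tpE; try lia.
by rewrite /a_fun /swap; case_ifs.
Qed.

Lemma perm_inordE n (s : 'S_n.+1) (f : nat -> nat) x :
  (forall i, s i = f i :> nat) -> x <= n -> s (inord x) = inord (f x).
Proof.
move=> sE lexn; apply: val_inj; rewrite /= sE inordK // inordK //.
by rewrite -[x](@inordK n) // -sE.
Qed.

Lemma tp_inord n x y : x <= n -> y <= n -> tp n.+1 x y = tperm (inord x) (inord y).
Proof. by move=> lexn leyn; rewrite /tp !insubT; congr tperm; apply: val_inj; rewrite /= inordK. Qed.

Lemma tperm_inordE n x y (i : 'I_n.+1) : x <= n -> y <= n ->
  tperm (inord x) (inord y) i = swap x y i :> nat.
Proof. by move=> lexn leyn; rewrite -tp_inord ?tpE. Qed.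

Section TranspositionsInGroup.
Variables (T : finType) (H : {group {perm T}}).

Lemma tperm_trans_mem x y z :
  tperm x y \in H -> tperm y z \in H -> tperm x z \in H.
Proof.
move=> Hxy Hyz; have [exy|_] := eqVneq x y; first by rewrite exy.
have [exz|nexz] := eqVneq x z; first by rewrite exz tperm1 group1.
have [eyz|neyz] := eqVneq y z; first by rewrite -eyz.
by rewrite -(tpermJ_tperm neyz nexz) groupJ // tpermC.
Qed.

Lemma group_tperm_full x : (forall y, tperm x y \in H) -> H = [set: {perm T}] :> {set _}.
Proof.
move=> Hx; apply/eqP; rewrite eqEsubset subsetT -(gen_tperm x) gen_subG.
by apply/subsetP => _ /imsetP[y _ ->].
Qed.

End TranspositionsInGroup.

Lemma Aut_inverting_relation (gT : finGroupType) (phi : {perm gT}) (a c : gT) k m :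
    phi \in Aut [set: gT] -> phi a = a^-1 -> phi c = c^-1 ->
  ((a ^+ k) ^ c^-1 * a) ^+ m = 1 -> (a * (a ^+ k) ^ c) ^+ m = 1.
Proof.
move=> Aphi phia phic rel; apply: invg_inj; rewrite invg1 -expgVn invMg.
have phiE x : autm_morphism Aphi x = phi x by rewrite /= autmE.
move/(congr1 (autm Aphi)): rel; rewrite morph1 !(morphX, morphM, morphJ, morphV) ?inE //.
by rewrite !phiE phia phic invgK -conjVg expgVn.
Qed.

Section GeneratorsOfSn.
Variables (n p : nat).
Hypotheses (lt2p : 2 < p) (lepn : p + 3 <= n.+1).
Local Notation a := (elt_a n.+1 p).
Local Notation c := (elt_c n.+1 p).
Local Notation pt x := (@inord n x).

Lemma elt_a_val (i : 'I_n.+1) : a i = a_fun p i :> nat.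
Proof. by rewrite elt_aE //; lia. Qed.

Lemma elt_c_val (i : 'I_n.+1) : c i = c_fun n.+1 p i :> nat.
Proof. by rewrite elt_cE //; lia. Qed.

Lemma elt_c_inord x : x <= n -> c (pt x) = pt (c_fun n.+1 p x).
Proof. exact/perm_inordE/elt_c_val. Qed.

Lemma elt_a_cube : a ^+ 3 = tperm (pt 1) (pt p.+2).
Proof.
apply/permP => i; apply: val_inj; rewrite permX /= tperm_inordE; try lia.
by rewrite !elt_a_val; have := ltn_ord i; rewrite /a_fun /swap; case_ifs.
Qed.

Lemma elt_a_cube_conj : (a ^+ 3) ^ c^-1 = tperm (pt 0) (pt p.+1).
Proof.
have -> : a ^+ 3 = tperm (pt 0) (pt p.+1) ^ c; last by rewrite conjgK.
rewrite elt_a_cube tpermJ !elt_c_inord; try lia.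
by congr (tperm (pt _) (pt _)); rewrite /c_fun; case_ifs.
Qed.

Lemma elt_a_relation : ((a ^+ 3) ^ c^-1 * a) ^+ 2 = 1.
Proof.
rewrite elt_a_cube_conj; apply/permP => i; apply: ord_inj.
rewrite expgS expg1 permM !(permM _ a) perm1 !(elt_a_val, tperm_inordE); try lia.
by have := ltn_ord i; rewrite /a_fun /swap; case_ifs.
Qed.

Lemma inverted_relation_fails : (a * (a ^+ 3) ^ c) ^+ 2 != 1.
Proof.
apply/eqP => /permP/(_ (pt 0))/(congr1 (@nat_of_ord _)).
rewrite elt_a_cube tpermJ !elt_c_inord; try lia.
rewrite expgS expg1 permM !(permM a) perm1 !(elt_a_val, tperm_inordE) ?inordK;
  try by [lia | rewrite /c_fun; case_ifs].
by rewrite /a_fun /c_fun /swap; case_ifs.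
Qed.

Lemma no_inverting_automorphism :
  ~ exists phi : {perm {perm 'I_n.+1}},
      [/\ phi \in Aut [set: {perm 'I_n.+1}], phi a = a^-1 & phi c = c^-1].
Proof.
case=> phi [Aphi phia phic]; move/eqP: inverted_relation_fails; apply.
exact: Aut_inverting_relation Aphi phia phic elt_a_relation.
Qed.

Definition linked x y := tperm (pt x) (pt y) \in <<[set a; c]>>.

Lemma linked_sym x y : linked x y -> linked y x.
Proof. by rewrite /linked tpermC. Qed.

Lemma linked_trans x y z : linked x y -> linked y z -> linked x z.
Proof. exact: tperm_trans_mem. Qed.

Lemma linked_conj (s : {perm 'I_n.+1}) (f : nat -> nat) x y x' y' :
    s \in <<[set a; c]>> -> (forall i, s i = f i :> nat) -> x <= n -> y <= n ->
  f x = x' -> f y = y' -> linked x y -> linked x' y'.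
Proof.
move=> Hs sE lexn leyn <- <- Hxy; rewrite /linked -!(perm_inordE sE) // -tpermJ.
exact: groupJ.
Qed.

Lemma elt_a_mem : a \in <<[set a; c]>>.
Proof. by rewrite mem_gen // !inE eqxx. Qed.

Lemma elt_c_mem : c \in <<[set a; c]>>.
Proof. by rewrite mem_gen // !inE eqxx orbT. Qed.

Lemma linked_0_succp : linked 0 p.+1.
Proof. by rewrite /linked -elt_a_cube_conj groupJ ?groupV ?groupX ?elt_a_mem ?elt_c_mem. Qed.

Lemma linked_p_succp : linked p p.+1.
Proof.
apply/linked_sym/(linked_conj elt_a_mem elt_a_val _ _ _ _ linked_0_succp);
  by rewrite /a_fun; case_ifs.
Qed.

Lemma linked_succ_block k : p + k < n -> linked (p + k) (p + k).+1.
Proof.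
elim: k => [|k IHk] ltpkn; first by rewrite addn0 linked_p_succp.
apply: (linked_conj elt_c_mem elt_c_val _ _ _ _ (IHk _)); by rewrite /c_fun; case_ifs.
Qed.

Lemma linked_block k : p + k <= n -> linked p (p + k).
Proof.
elim: k => [|k IHk] lepkn; first by rewrite addn0 /linked tperm1 group1.
by rewrite addnS; apply: linked_trans (IHk _) (linked_succ_block _); lia.
Qed.

Lemma linked_below_p x : x < p -> linked x p.
Proof.
have linked_succp_p := linked_sym linked_p_succp.
elim: x => [|x IHx] ltxp; first exact: linked_trans linked_0_succp linked_succp_p.
apply: linked_trans linked_succp_p.
apply: (linked_conj elt_c_mem elt_c_val _ _ _ _ (IHx _)); by rewrite /c_fun; case_ifs.
Qed.

Lemma elt_ac_generate : <<[set a; c]>> = [set: {perm 'I_n.+1}].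
Proof.
apply: (group_tperm_full (H := <<[set a; c]>>%G) (x := pt p)) => y.
rewrite -(inord_val y); have := ltn_ord y; case: (ltnP y p) => [ltyp _|leyp ltyn].
  exact/linked_sym/linked_below_p.
by rewrite -(subnKC leyp); apply: linked_block; lia.
Qed.

End GeneratorsOfSn.

Theorem mainTheorem12 (n p : nat) (hn : 7 <= n) (hp : prime p) (hodd : odd p)
    (hpn : p + 3 <= n) :
  (~ exists phi : {perm {perm 'I_n}},
       [/\ phi \in Aut [set: {perm 'I_n}],
           phi (elt_a n p) = ((elt_a n p)^-1)%g
         & phi (elt_c n p) = ((elt_c n p)^-1)%g])
  /\ (<<[set elt_a n p; elt_c n p]>>%g = [set: {perm 'I_n}]).
Proof.
have lt2p : 2 < p by case: p hp hodd {hpn} => [|[|[|q]]].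
case: n hn hpn => [//|n] _ hpn.
by split; [exact: no_inverting_automorphism | exact: elt_ac_generate].
Qed.
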